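(* Let $G$ be a $(2K_2, K_1+C_4)$-free graph. Then $\chi(G)\le \omega(G)+5$.
   Context: All graphs are finite, simple and undirected. $C_4$ is the cycle on 4 vertices; $2K_2$ is the disjoint union of two edges; $K_1+C_4$ is the graph obtained from $C_4$ by adding a vertex adjacent to all four of its vertices. A graph is $\mathcal F$-free if it has no induced subgraph isomorphic to a member of $\mathcal F$. $\chi$ is the chromatic number and $\omega$ the clique number. *)

From mathcomp Require Import all_boot.
Set Implicit Arguments. Unset Strict Implicit. Unset Printing Implicit Defensive.

Section Graphs.
Variable T : finType.
Variable e : rel T.

Definition simple_graph : Prop := symmetric e /\ irreflexive e.

Definition has_induced (n : nat) (H : rel 'I_n) : Prop :=
  exists f : 'I_n -> T, injective f /\ forall i j, e (f i) (f j) = H i j.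

Definition induced_free (n : nat) (H : rel 'I_n) : Prop := ~ has_induced H.

Definition is_clique (S : {set T}) : bool :=
  [forall x in S, forall y in S, (x != y) ==> e x y].

Definition clique_number : nat := \max_(S : {set T} | is_clique S) #|S|.

Definition colorable (k : nat) : bool :=
  [exists c : {ffun T -> 'I_k}, [forall x, forall y, e x y ==> (c x != c y)]].

(* least k <= #|T| such that G is k-colourable (a simple graph is always
   #|T|-colourable, so this is the chromatic number) *)
Definition chromatic_number : nat :=
  \big[minn/#|T|]_(k < #|T|.+1 | colorable k) k.
End Graphs.

(* 2K_2 on vertices 0..3: edges 01 and 23 *)
Definition twoK2 : rel 'I_4 :=
  fun i j => (val i != val j) && ((val i)./2 == (val j)./2).

(* K_1 + C_4 on vertices 0..4: C_4 = 0-1-2-3-0, vertex 4 adjacent to all *)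
Definition K1C4 : rel 'I_5 :=
  fun i j =>
    (val i != val j) &&
    [|| val i == 4, val j == 4,
        ((val i).+1 %% 4 == val j) | ((val j).+1 %% 4 == val i)].

From mathcomp Require Import all_boot.

Set Implicit Arguments. Unset Strict Implicit. Unset Printing Implicit Defensive.

(* Every neighbourhood N(u) is C4-free, as G has no induced K1+C4, and 2K2-free.  Fix a
   maximum clique Q of N(u).  Each vertex of N(u) has a non-neighbour in Q; for each q in Q
   the vertices whose only non-neighbour in Q is q are pairwise nonadjacent (otherwise
   trading q for two of them enlarges Q), and so are the vertices with at least two
   non-neighbours in Q (two adjacent ones span a 2K2 or a C4 with Q).  Hence N(u) is
   (|Q|+1)-colourable, and |Q| + 1 <= omega(G).  Now take an edge uv with u in a maximum
   clique of N(v): the vertices of N(v) not adjacent to u miss u in that clique, so the same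
   two facts colour them with 2 colours, and the common non-neighbours of u and v are
   independent because G is 2K2-free.  So in fact chi(G) <= omega(G) + 3. *)

Lemma big_minn_leq (I : eqType) (r : seq I) (P : pred I) (F : I -> nat) x j :
  j \in r -> P j -> \big[minn/x]_(i <- r | P i) F i <= F j.
Proof.
elim: r => // i r IHr; rewrite inE big_cons => /predU1P[<- -> | jr Pj].
  exact: geq_minl.
by case: (P i); rewrite ?geq_min IHr ?orbT.
Qed.

Section Colorings.
Variables (T : finType) (e : rel T).

Definition stable (S : {set T}) : bool := [forall x in S, forall y in S, ~~ e x y].

Lemma stableP (S : {set T}) :
  reflect (forall x y, x \in S -> y \in S -> ~~ e x y) (stable S).
Proof.
apply: (iffP forall_inP) => [stS x y xS | H x xS]; first exact: (forall_inP (stS x xS)).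
by apply/forall_inP => y; apply: H.
Qed.

Definition coloring_on (S : {set T}) (k : nat) (c : T -> nat) : Prop :=
  (forall x, x \in S -> c x < k) /\
  (forall x y, x \in S -> y \in S -> e x y -> c x != c y).

Definition colorable_on (S : {set T}) (k : nat) : Prop :=
  exists c, coloring_on S k c.

Lemma colorable_onS (A B : {set T}) k :
  A \subset B -> colorable_on B k -> colorable_on A k.
Proof.
move=> /subsetP sAB [c [c_lt c_proper]].
by exists c; split=> [x /sAB | x y /sAB xB /sAB yB]; [apply: c_lt | apply: c_proper].
Qed.

Lemma colorable_onU (A B : {set T}) a b :
  colorable_on A a -> colorable_on B b -> colorable_on (A :|: B) (a + b).
Proof.
move=> [cA [cA_lt cA_proper]] [cB [cB_lt cB_proper]].
have ltA x n : x \in A -> cA x < a + n by move/cA_lt/leq_trans; apply; apply: leq_addr.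
exists (fun x => if x \in A then cA x else a + cB x); split.
  move=> x /setUP[xA | xB]; first by rewrite xA ltA.
  by case: ifP => [/ltA // | _]; rewrite ltn_add2l cB_lt.
move=> x y /setUP[xA | xB] /setUP[yA | yB] exy.
- by rewrite xA yA cA_proper.
- rewrite xA; case: ifP => [yA | _]; first exact: cA_proper.
  by rewrite neq_ltn ltA.
- rewrite yA; case: ifP => [xA | _]; first exact: cA_proper.
  by rewrite neq_ltn ltA ?orbT.
- case: ifP => [xA | _]; case: ifP => [yA | _].
  + exact: cA_proper.
  + by rewrite neq_ltn ltA.
  + by rewrite neq_ltn ltA ?orbT.
  + by rewrite eqn_add2l cB_proper.
Qed.

Lemma colorable_on_stable (S : {set T}) : stable S -> colorable_on S 1.
Proof.
move/stableP=> stS; exists (fun=> 0); split=> // x y xS yS exy.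
by rewrite (negbTE (stS x y xS yS)) in exy.
Qed.

Lemma colorable_on_bigcup (I : finType) (P : {set I}) (A : I -> {set T}) :
  (forall i, i \in P -> stable (A i)) -> colorable_on (\bigcup_(i in P) A i) #|P|.
Proof.
move=> stA.
pose c x := if [pick i in P | x \in A i] is Some i then index i (enum P) else 0.
have cP x : x \in \bigcup_(i in P) A i ->
    exists2 i, (i \in P) && (x \in A i) & c x = index i (enum P).
  rewrite /c; case: pickP => [i iPA _ | noP /bigcupP[i iP xAi]]; first by exists i.
  by have := noP i; rewrite iP xAi.
exists c; split=> [x /cP[i /andP[iP _] ->] | x y].
  by rewrite cardE index_mem mem_enum.
move=> /cP[i /andP[iP xAi] ->] /cP[j /andP[jP yAj] ->]; apply: contraTneq => idx_ij.
have ij : i = j by apply: (index_inj i _ _ idx_ij); rewrite mem_enum.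
rewrite ij in xAi.
exact: (stableP _ (stA j jP)).
Qed.

Lemma chromatic_number_leq k :
  colorable_on [set: T] k -> chromatic_number e <= k.
Proof.
move=> [c [c_lt c_proper]]; rewrite /chromatic_number.
have [kT | Tk] := leqP k #|T|; last first.
  apply: leq_trans (ltnW Tk); elim/big_ind: _ => // [m n mT _ | i _].
    by rewrite geq_min mT.
  by rewrite -ltnS.
apply: (@big_minn_leq _ _ _ _ _ (Ordinal (kT : k < #|T|.+1))) => //=.
  exact: mem_index_enum.
apply/existsP; exists [ffun x => Ordinal (c_lt x (in_setT x))].
apply/forallP=> x; apply/forallP=> y; apply/implyP=> exy; rewrite !ffunE.
by apply: contra (c_proper x y (in_setT x) (in_setT y) exy) => /eqP [->].
Qed.

End Colorings.

Section Cliques.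
Variables (T : finType) (e : rel T).

Lemma cliqueP (S : {set T}) :
  reflect (forall x y, x \in S -> y \in S -> x != y -> e x y) (is_clique e S).
Proof.
apply: (iffP forall_inP) => [clS x y xS | H x xS].
  by have /forall_inP clSx := clS x xS; move=> yS; apply/implyP/clSx.
by apply/forall_inP => y yS; apply/implyP; apply: H.
Qed.

Lemma is_cliqueS (A B : {set T}) : A \subset B -> is_clique e B -> is_clique e A.
Proof.
move=> /subsetP sAB /cliqueP clB; apply/cliqueP => x y /sAB xB /sAB yB; exact: clB.
Qed.

Definition max_clique_in (S Q : {set T}) : Prop :=
  [/\ Q \subset S, is_clique e Q &
      forall R : {set T}, R \subset S -> is_clique e R -> #|R| <= #|Q|].

Lemma max_clique_in_exists (S : {set T}) : exists Q, max_clique_in S Q.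
Proof.
have cl0 : is_clique e set0 && (set0 \subset S).
  by rewrite sub0set andbT; apply/cliqueP => x y; rewrite inE.
have [Q /andP[clQ sQS] maxQ] :=
  @arg_maxnP _ set0 (fun R : {set T} => is_clique e R && (R \subset S)) (fun R => #|R|) cl0.
by exists Q; split=> // R sRS clR; apply: maxQ; rewrite clR sRS.
Qed.

Hypothesis esym : symmetric e.

Lemma is_cliqueU1 x (Q : {set T}) :
  is_clique e Q -> (forall q, q \in Q -> e x q) -> is_clique e (x |: Q).
Proof.
move=> /cliqueP clQ xQ; apply/cliqueP => a b.
case/setU1P=> [-> | aQ] /setU1P[-> | bQ]; rewrite ?eqxx // => ab.
- exact: xQ.
- by rewrite esym xQ.
- exact: clQ.
Qed.

Hypothesis eirr : irreflexive e.

Lemma clique_nbrs_ltn u (Q : {set T}) :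
  Q \subset [set x | e u x] -> is_clique e Q -> #|Q| < clique_number e.
Proof.
move=> /subsetP sQN clQ.
have uQ : u \notin Q by apply/negP => /sQN; rewrite inE eirr.
suff : #|u |: Q| <= clique_number e by rewrite cardsU1 uQ.
apply: (@leq_bigmax_cond _ (is_clique e) (fun R => #|R|)); apply: is_cliqueU1 => // q /sQN.
by rewrite inE.
Qed.

Definition nonnbrs (Q : {set T}) (x : T) : {set T} := [set q in Q | ~~ e x q].

Lemma nonnbrs_mem (Q : {set T}) q : is_clique e Q -> q \in Q -> nonnbrs Q q = [set q].
Proof.
move=> /cliqueP clQ qQ; apply/setP => p; rewrite !inE.
have [-> | pq] := eqVneq p q; first by rewrite qQ eirr.
by case: (boolP (p \in Q)) => // pQ; rewrite esym clQ.
Qed.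

End Cliques.

Section InducedSubgraphs.
Variables (T : finType) (e : rel T).
Hypotheses (esym : symmetric e) (eirr : irreflexive e).

Lemma has_induced_seq n (H : rel 'I_n) (x0 : T) (s : seq T) :
  size s = n -> uniq s ->
  (forall i j : 'I_n, e (nth x0 s i) (nth x0 s j) = H i j) -> has_induced e H.
Proof.
move=> size_s uniq_s adj; exists (fun i => nth x0 s i); split=> // i j /eqP.
by rewrite nth_uniq ?size_s // => /eqP/val_inj.
Qed.

Lemma adj_neq x y : e x y -> x != y.
Proof. by apply: contraTneq => ->; rewrite eirr. Qed.

Lemma nonadj_neq x y z : e y z -> ~~ e x z -> x != y.
Proof. by move=> yz; apply: contraNneq => ->. Qed.

Lemma no_induced_2K2 a b c d : induced_free e twoK2 -> e a b -> e c d ->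
  ~~ e a c -> ~~ e a d -> ~~ e b c -> ~~ e b d -> False.
Proof.
move=> free ab cd nac nad nbc nbd; apply: free.
have dc : e d c by rewrite esym.
apply: (@has_induced_seq _ _ a [:: a; b; c; d]) => //.
  rewrite /= !inE !negb_or (adj_neq ab) (adj_neq cd).
  by rewrite (nonadj_neq cd nad) (nonadj_neq dc nac) (nonadj_neq cd nbd) (nonadj_neq dc nbc).
move: nac nad nbc nbd => /negbTE ac /negbTE ad /negbTE bc /negbTE bd.
case=> [[|[|[|[|i]]]] Hi] [[|[|[|[|j]]]] Hj] //=;
  by rewrite /twoK2 /= ?eirr ?(esym b a) ?(esym c a) ?(esym d a) ?(esym c b)
    ?(esym d b) ?(esym d c).
Qed.

Definition C4_free (S : {set T}) : Prop :=
  forall a b c d, a \in S -> b \in S -> c \in S -> d \in S -> a != c -> b != d ->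
  e a b -> e b c -> e c d -> e d a -> ~~ e a c -> ~~ e b d -> False.

Lemma C4_free_nbrs w : induced_free e K1C4 -> C4_free [set x | e w x].
Proof.
move=> free a b c d; rewrite !inE => wa wb wc wd ac bd ab bc cd da nac nbd.
apply: free; apply: (@has_induced_seq _ _ a [:: a; b; c; d; w]) => //.
  rewrite /= !inE !negb_or ac bd (adj_neq ab) (adj_neq bc) (adj_neq cd).
  by rewrite (eq_sym a d) (adj_neq da) !(eq_sym _ w) !adj_neq.
move: nac nbd => /negbTE nac /negbTE nbd.
case=> [[|[|[|[|[|i]]]]] Hi] [[|[|[|[|[|j]]]]] Hj] //=;
  by rewrite /K1C4 /= ?eirr ?(esym b a) ?(esym c a) ?(esym a d) ?(esym c b) ?(esym d b)
    ?(esym d c) ?(esym a w) ?(esym b w) ?(esym c w) ?(esym d w) ?nac ?nbd.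
Qed.

Lemma stable_common_nonnbrs u v :
  induced_free e twoK2 -> e u v -> stable e [set x | ~~ e u x && ~~ e v x].
Proof.
move=> free euv; apply/stableP => x y; rewrite !inE => /andP[nux nvx] /andP[nuy nvy].
by apply/negP => exy; apply: (no_induced_2K2 free euv exy nux nuy nvx nvy).
Qed.

End InducedSubgraphs.

Section MaximumClique.
Variables (T : finType) (e : rel T).
Hypotheses (esym : symmetric e) (eirr : irreflexive e).
Variables (S Q : {set T}).
Hypothesis maxQ : max_clique_in e S Q.

Lemma nonnbrs_neq0 x : x \in S -> nonnbrs e Q x != set0.
Proof.
have [sQS clQ maxcard] := maxQ.
move=> xS; apply/negP => /eqP M0.
have adj q : q \in Q -> e x q.
  move=> qQ; apply/negPn/negP => nxq.
  have : q \in nonnbrs e Q x by rewrite inE qQ nxq.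
  by rewrite M0 inE.
have xQ : x \notin Q by apply/negP => /adj; rewrite eirr.
suff : #|x |: Q| <= #|Q| by rewrite cardsU1 xQ add1n ltnn.
by apply: maxcard (is_cliqueU1 esym clQ adj); rewrite subUset sub1set xS sQS.
Qed.

Lemma stable_nonnbrs1 p : stable e [set x in S | nonnbrs e Q x == [set p]].
Proof.
have [sQS clQ maxcard] := maxQ.
have adj z q : nonnbrs e Q z = [set p] -> q \in Q -> q != p -> e z q.
  move=> Mz qQ qp; apply/negPn/negP => nzq.
  have : q \in nonnbrs e Q z by rewrite inE qQ nzq.
  by rewrite Mz inE (negbTE qp).
have outQ z w : nonnbrs e Q z = [set p] -> nonnbrs e Q w = [set p] -> e z w -> z \notin Q.
  move=> Mz Mw ezw; apply/negP => zQ.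
  have zp : z = p by apply: set1_inj; rewrite -Mz nonnbrs_mem.
  have : p \in nonnbrs e Q w by rewrite Mw set11.
  by rewrite inE -zp esym ezw andbF.
apply/stableP => x y; rewrite !inE => /andP[xS /eqP Mx] /andP[yS /eqP My].
apply/negP => exy; have eyx : e y x by rewrite esym.
have xQ := outQ x y Mx My exy; have yQ := outQ y x My Mx eyx.
have pQ : p \in Q.
  have : p \in nonnbrs e Q x by rewrite Mx set11.
  by rewrite inE => /andP[].
have clK : is_clique e (x |: (y |: (Q :\ p))).
  apply: (is_cliqueU1 esym) => [|q /setU1P[-> // | /setD1P[qp qQ]]];
    last exact: adj Mx qQ qp.
  apply: (is_cliqueU1 esym) => [|q /setD1P[qp qQ]]; last exact: adj My qQ qp.
  exact: is_cliqueS (subsetDl Q [set p]) clQ.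
suff : #|x |: (y |: (Q :\ p))| <= #|Q|.
  rewrite [in X in _ <= X](cardsD1 p Q) pQ !cardsU1 !inE (negbTE (adj_neq eirr exy)).
  by rewrite (negbTE xQ) (negbTE yQ) !andbF !add1n ltnn.
apply: maxcard clK; rewrite !subUset !sub1set xS yS.
exact: subset_trans (subsetDl Q [set p]) sQS.
Qed.

End MaximumClique.

Section C4FreeNeighbourhood.
Variables (T : finType) (e : rel T).
Hypotheses (esym : symmetric e) (eirr : irreflexive e).
Hypothesis free2K2 : induced_free e twoK2.
Variables (S Q : {set T}).
Hypotheses (freeC4 : C4_free e S) (maxQ : max_clique_in e S Q).

Lemma nonnbrs_subset_card x y :
  e x y -> nonnbrs e Q x \subset nonnbrs e Q y -> #|nonnbrs e Q x| <= 1.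
Proof.
have [_ /cliqueP clQ _] := maxQ.
move=> exy /subsetP sxy; rewrite leqNgt; apply/negP => /card_gt1P[a [b [ax bx ab]]].
move: (ax) (bx) (sxy a ax) (sxy b bx); rewrite !inE.
move=> /andP[aQ nxa] /andP[bQ nxb] /andP[_ nya] /andP[_ nyb].
exact: (no_induced_2K2 esym eirr free2K2 exy (clQ a b aQ bQ ab) nxa nxb nya nyb).
Qed.

Lemma nonnbrs_comparable x y : x \in S -> y \in S -> x \notin Q -> y \notin Q -> e x y ->
  (nonnbrs e Q x \subset nonnbrs e Q y) || (nonnbrs e Q y \subset nonnbrs e Q x).
Proof.
have [/subsetP sQS /cliqueP clQ _] := maxQ.
move=> xS yS xQ yQ exy; apply: contraT; rewrite negb_or.
case/andP=> /subsetPn[a ax nay] /subsetPn[b by_ nbx].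
move: ax nay by_ nbx; rewrite !inE => /andP[aQ nxa].
rewrite aQ negbK => eya /andP[bQ nyb]; rewrite bQ negbK => exb.
have ab : a != b by apply: contraTneq eya => ->.
have outQ z q : z \notin Q -> q \in Q -> z != q by move=> zQ qQ; apply: contraNneq zQ => ->.
exfalso; apply: (freeC4 xS yS (sQS a aQ) (sQS b bQ) (outQ x a xQ aQ) (outQ y b yQ bQ)
  exy eya (clQ a b aQ bQ ab) _ nxa nyb).
by rewrite esym.
Qed.

Lemma stable_many_nonnbrs : stable e [set x in S | 1 < #|nonnbrs e Q x|].
Proof.
have [_ clQ _] := maxQ.
have outQ x : 1 < #|nonnbrs e Q x| -> x \notin Q.
  by apply: contraTN => xQ; rewrite nonnbrs_mem // cards1.
apply/stableP => x y; rewrite !inE => /andP[xS Mx] /andP[yS My].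
apply/negP => exy; have eyx : e y x by rewrite esym.
case/orP: (nonnbrs_comparable xS yS (outQ x Mx) (outQ y My) exy).
  by move/(nonnbrs_subset_card exy); rewrite leqNgt Mx.
by move/(nonnbrs_subset_card eyx); rewrite leqNgt My.
Qed.

Lemma C4_free_cover : S \subset
  (\bigcup_(p in Q) [set x in S | nonnbrs e Q x == [set p]]) :|:
  [set x in S | 1 < #|nonnbrs e Q x|].
Proof.
apply/subsetP => x xS; rewrite !inE xS /=.
have := nonnbrs_neq0 esym eirr maxQ xS; rewrite -card_gt0 leq_eqVlt eq_sym.
case/orP=> [/cards1P[p Mx] | ->]; last by rewrite orbT.
have : p \in nonnbrs e Q x by rewrite Mx set11.
rewrite inE => /andP[pQ _]; apply/orP; left.
by apply/bigcupP; exists p; rewrite // inE xS Mx eqxx.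
Qed.

Lemma colorable_on_C4_free : colorable_on e S #|Q|.+1.
Proof.
rewrite -addn1; apply: colorable_onS C4_free_cover _.
apply: colorable_onU; last exact/colorable_on_stable/stable_many_nonnbrs.
by apply: colorable_on_bigcup => p _; apply: stable_nonnbrs1.
Qed.

Lemma colorable_on_C4_free_nonnbrs u : u \in Q -> colorable_on e [set x in S | ~~ e x u] 2.
Proof.
move=> uQ; apply: (@colorable_onS _ _ _
  ([set x in S | nonnbrs e Q x == [set u]] :|: [set x in S | 1 < #|nonnbrs e Q x|])).
  apply/subsetP => x; rewrite !inE => /andP[xS nxu]; rewrite xS /=.
  rewrite orbC; case: ltnP => //= M1.
  by rewrite eq_sym eqEcard sub1set cards1 M1 inE uQ nxu.
apply: (@colorable_onU _ _ _ _ 1 1); apply: colorable_on_stable.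
  exact: stable_nonnbrs1.
exact: stable_many_nonnbrs.
Qed.

End C4FreeNeighbourhood.

Theorem corollary3p4 (T : finType) (e : rel T) :
  simple_graph e ->
  induced_free e twoK2 ->
  induced_free e K1C4 ->
  chromatic_number e <= clique_number e + 5.
Proof.
move=> [esym eirr] free2K2 freeK1C4.
case: (pickP (fun vw : T * T => e vw.1 vw.2)) => [[v w] /= evw | no_edge]; last first.
  have stT : stable e [set: T] by apply/stableP => x y _ _; rewrite (no_edge (x, y)).
  by apply: leq_trans (chromatic_number_leq (colorable_on_stable stT)) _; rewrite addnS.
set Nv := [set x | e v x]; have [Q maxQ] := max_clique_in_exists e Nv.
have wNv : w \in Nv by rewrite inE.
have /set0Pn[u] := nonnbrs_neq0 esym eirr maxQ wNv; rewrite inE => /andP[uQ _].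
have [sQNv _ _] := maxQ.
have euv : e u v by have := subsetP sQNv u uQ; rewrite inE esym.
set Nu := [set x | e u x]; have [Q' maxQ'] := max_clique_in_exists e Nu.
have [sQ'Nu clQ' _] := maxQ'.
have colNu := colorable_on_C4_free esym eirr free2K2
  (C4_free_nbrs esym eirr freeK1C4) maxQ'.
have colNv := colorable_on_C4_free_nonnbrs esym eirr free2K2
  (C4_free_nbrs esym eirr freeK1C4) maxQ uQ.
have colR := colorable_on_stable (stable_common_nonnbrs esym eirr free2K2 euv).
have cover : [set: T] \subset
    Nu :|: [set x in Nv | ~~ e x u] :|: [set x | ~~ e u x && ~~ e v x].
  by apply/subsetP => x _; rewrite !inE (esym x); case: (e u x); case: (e v x).
have colT := colorable_onS cover (colorable_onU (colorable_onU colNu colNv) colR).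
apply: leq_trans (chromatic_number_leq colT) _.
by rewrite -addnA leq_add // (clique_nbrs_ltn esym eirr sQ'Nu clQ').
Qed.
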